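(* Let $\kappa_n>0$, $\gamma>0$ and $\chi_n,\Omega,\tilde\omega_n\in\mathbb{R}$, and put $Q_n=-(\gamma+i\Omega-i\tilde\omega_n)$ and $S_n=\gamma\chi_n/2$. Let $F_n:[0,\infty)\to\mathbb{C}$ be the solution of $$\frac{\mathrm{d}}{\mathrm{d}t}F_n(t)=\kappa_nF_n(t)^2+Q_nF_n(t)+S_n,\qquad F_n(0)=0 .$$ If $\tilde\omega_n=\Omega$ and $4\kappa_nS_n-Q_n^2\le 0$, then $F_n(t)$ converges to a constant as $t\to\infty$. Consequently the time-varying coefficients $\kappa_n(F_n(t)+F_n^*(t))$, $\kappa_nF_n^*(t)$ and $\kappa_nF_n(t)$ in the evolution equations of $\langle\sigma_n^+\sigma_n^-\rangle$, $\langle\sigma_n^+a\rangle$ and $\langle\sigma_n^-a^\dagger\rangle$ converge to constants, i.e. these trajectories become Markovian as $t\to\infty$.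
   Context: Setting: an $N$-level ladder atom coupled to a cavity mode (annihilation operator $a$) and to a non-Markovian bosonic environment with memory kernel $\alpha(t,s)=\frac{\gamma}{2}e^{-\gamma|t-s|-i\Omega(t-s)}$; $\sigma_n^-=|n-1\rangle\langle n|$, $\sigma_n^+=|n\rangle\langle n-1|$, $\tilde\omega_n$ is the transition frequency between levels $n-1$ and $n$, $\kappa_n$ is the decay rate of level $n$ to the environment and $\chi_n$ a real environmental constant. The non-Markovian decay is encoded by the complex function $F_n(t)$ defined by the Riccati equation above; the interaction is called Markovian when $F_n$ is constant, and the dynamics is said to converge to Markovian when $F_n(t)$ converges to a constant as $t\to\infty$. With $\tilde g_n=g_ne^{i\Delta_nt}$, the mean values satisfy, among others, $\frac{d}{dt}\langle\sigma_n^+ a\rangle=-i\Delta_n\langle\sigma_n^+a\rangle-i\tilde g_n^*\langle\sigma_n^+\sigma_n^-\rangle+i\tilde g_n^*\langle a^\dagger a\rangle-F_n^*(t)\kappa_n\langle\sigma_n^+a\rangle$ (and its conjugate for $\langle\sigma_n^-a^\dagger\rangle$), and the population equation for $\langle\sigma_n^+\sigma_n^-\rangle$ contains the decay term $-(F_n+F_n^* )\kappa_n\langle\sigma_n^+\sigma_n^-\rangle$. *)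

From Stdlib Require Import Reals.
From Coquelicot Require Import Coquelicot.

Open Scope C_scope.

Definition Qn (gamma Omega omega : R) : C :=
  - (RtoC gamma + Ci * RtoC Omega - Ci * RtoC omega).

Definition Sn (gamma chi : R) : C := RtoC (gamma * chi / 2).

Definition riccati_solution (kappa gamma chi Omega omega : R) (F : R -> C) : Prop :=
  F 0%R = 0 /\
  filterlim F (at_right 0%R) (locally (F 0%R)) /\
  (forall t : R, (0 < t)%R ->
     is_derive F t (RtoC kappa * (F t * F t) + Qn gamma Omega omega * F t + Sn gamma chi)).

Definition converges_at_infty (G : R -> C) : Prop :=
  exists L : C, filterlim G (Rbar_locally p_infty) (locally L).

From Stdlib Require Import Reals Lra Psatz.
From Coquelicot Require Import Coquelicot.

(* For omega = Omega the coefficients Q = -gamma and S are real, so the imaginary part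
   Y of F solves the linear equation Y' = (2 kappa Re F - gamma) Y with Y(0) = 0 and
   vanishes by a Gronwall argument.  The real part X then solves the scalar Riccati
   equation X' = kappa (X - a) (X - b), whose roots a <= b are real with b > 0 by the
   discriminant condition.  The linearising substitution gives the closed form
   (1 + b h(t)) (X(t) - a) = -a, where h(t) = (exp(kappa (b - a) t) - 1) / (b - a)
   (or kappa t when a = b) grows at least linearly, so X(t) -> a.  All the
   coefficients of the theorem are real multiples of X for t > 0. *)

Open Scope R_scope.

Definition bounded_on_every_Ioc (f : R -> R) : Prop :=
  forall T, exists M, forall t, 0 < t <= T -> Rabs (f t) <= M.

Lemma filterlim_Rplus {T} {F : (T -> Prop) -> Prop} {FF : Filter F} (f g : T -> R) (u v : R) :
  filterlim f F (locally u) -> filterlim g F (locally v) ->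
  filterlim (fun t => f t + g t) F (locally (u + v)).
Proof.
  intros Hf Hg; apply (filterlim_comp_2 f g Rplus Hf Hg).
  exact (filterlim_plus (V := R_NormedModule) u v).
Qed.

Lemma filterlim_Rmult {T} {F : (T -> Prop) -> Prop} {FF : Filter F} (f g : T -> R) (u v : R) :
  filterlim f F (locally u) -> filterlim g F (locally v) ->
  filterlim (fun t => f t * g t) F (locally (u * v)).
Proof.
  intros Hf Hg; apply (filterlim_comp_2 f g Rmult Hf Hg).
  exact (filterlim_mult (K := R_AbsRing) u v).
Qed.

Lemma filterlim_at_right_continuous (f : R -> R) (x : R) :
  continuous f x -> filterlim f (at_right x) (locally (f x)).
Proof. intros Hf; exact (filterlim_filter_le_1 f (filter_le_within _) Hf). Qed.

Lemma bounded_on_every_Ioc_of_right_limit (f : R -> R) (l : R) :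
  filterlim f (at_right 0) (locally l) -> (forall t, 0 < t -> continuous f t) ->
  bounded_on_every_Ioc f.
Proof.
  intros Hl Hc T.
  destruct (proj1 (filterlim_locally _ _) Hl (mkposreal 1 Rlt_0_1)) as [d Hd].
  pose proof (cond_pos d) as Hd0.
  destruct (@bounded_continuity R_AbsRing R_NormedModule f (d/2) (Rmax T (d/2))) as [M HM].
  { intros x Hx. apply Hc. lra. }
  exists (Rmax (Rabs l + 1) M). intros t Ht.
  destruct (Rlt_or_le t (d/2)) as [Hsmall | Hlarge].
  - assert (Hnear : ball l 1 (f t)).
    { apply Hd; [change (Rabs (t - 0) < d); rewrite Rminus_0_r, Rabs_pos_eq|]; lra. }
    change (Rabs (f t - l) < 1) in Hnear.
    pose proof (Rabs_triang_inv (f t) l). pose proof (Rmax_l (Rabs l + 1) M). lra.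
  - assert (Hfar : norm (f t) < M) by (apply HM; pose proof (Rmax_l T (d/2)); lra).
    pose proof (Rmax_r (Rabs l + 1) M). change (Rabs (f t) < M) in Hfar. lra.
Qed.

Lemma bounded_on_every_Ioc_affine (f : R -> R) (c d : R) :
  bounded_on_every_Ioc f -> bounded_on_every_Ioc (fun t => c * f t + d).
Proof.
  intros Hf T; destruct (Hf T) as [M HM].
  exists (Rabs c * M + Rabs d); intros t Ht.
  eapply Rle_trans; [apply Rabs_triang|]; rewrite Rabs_mult.
  pose proof (Rabs_pos c); specialize (HM t Ht); nra.
Qed.

Lemma le_right_limit_of_nonpos_derive (v dv : R -> R) (t l : R) :
  0 < t -> (forall s, 0 < s <= t -> is_derive v s (dv s) /\ dv s <= 0) ->
  filterlim v (at_right 0) (locally l) -> v t <= l.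
Proof.
  intros Ht Hv Hl.
  assert (Hdecr : forall s, 0 < s < t -> v t <= v s).
  { intros s Hs.
    destruct (MVT_gen v s t dv) as [c [Hc Hmvt]];
      rewrite ?Rmin_left, ?Rmax_right in * by lra.
    - intros x Hx; apply Hv; lra.
    - intros x Hx; apply continuity_pt_filterlim, (ex_derive_continuous (V := R_NormedModule)).
      eexists; apply Hv; lra.
    - pose proof (proj2 (Hv c ltac:(lra))); nra. }
  apply (filterlim_le (F := at_right 0) (fun _ => v t) v (v t) l);
    [|apply filterlim_const | exact Hl].
  exists (mkposreal t Ht); intros s Hs Hs0; change (Rabs (s - 0) < t) in Hs.
  rewrite Rminus_0_r, Rabs_pos_eq in Hs by lra; apply Hdecr; lra.
Qed.

Lemma linear_ode_zero (phi a : R -> R) :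
  phi 0 = 0 -> filterlim phi (at_right 0) (locally 0) ->
  (forall t, 0 < t -> is_derive phi t (a t * phi t)) ->
  bounded_on_every_Ioc a ->
  forall t, 0 <= t -> phi t = 0.
Proof.
  intros Hphi0 Hlim Hd Hbnd t Ht.
  destruct (Req_dec t 0) as [-> | Ht0]; [exact Hphi0|].
  destruct (Hbnd t) as [M HM].
  assert (HM0 : 0 <= M) by (pose proof (Rabs_pos (a t)); specialize (HM t ltac:(lra)); lra).
  set (w := fun s => exp (- (2 * M) * s)).
  set (v := fun s => phi s * phi s * w s).
  assert (Hw : forall s, is_derive w s (- (2 * M) * w s)).
  { intros s; unfold w; auto_derive; [easy | ring]. }
  assert (Hvt : v t <= 0).
  { apply (le_right_limit_of_nonpos_derive v (fun s => 2 * (a s - M) * (phi s * phi s) * w s));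
      [lra| |].
    - intros s Hs; split.
      + unfold v; auto_derive.
        * repeat split; eexists; [apply Hd | apply Hd | apply Hw]; lra.
        * rewrite (is_derive_unique (fun x : R => phi x) s _ (Hd s ltac:(lra))),
            (is_derive_unique (fun x : R => w x) s _ (Hw s)); ring.
      + pose proof (Rle_abs (a s)); specialize (HM s Hs).
        assert (0 < w s) by apply exp_pos.
        assert (0 <= (M - a s) * (phi s * phi s)) by (apply Rmult_le_pos; nra).
        nra.
    - replace (locally 0) with (locally (0 * 0 * w 0)) by (f_equal; ring).
      apply filterlim_Rmult; [apply filterlim_Rmult; exact Hlim|].
      apply filterlim_at_right_continuous, (ex_derive_continuous (V := R_NormedModule)).
      eexists; apply Hw. }
  assert (0 < w t) by apply exp_pos.
  assert (phi t * phi t <= 0) by (unfold v in Hvt; nra).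
  nra.
Qed.

Lemma exp_growth_solution (k d : R) :
  0 < k -> 0 <= d ->
  exists h : R -> R, h 0 = 0 /\ (forall t, is_derive h t (k * (1 + d * h t))) /\
    (forall t, 0 <= t -> k * t <= h t).
Proof.
  intros Hk Hd; destruct (Rle_lt_or_eq_dec 0 d Hd) as [Hd0 | <-].
  - exists (fun t => (exp (k * d * t) - 1) / d); split; [|split].
    + rewrite Rmult_0_r, exp_0; field; lra.
    + intros t; auto_derive; [easy | field; lra].
    + intros t Ht; pose proof (exp_ineq1_le (k * d * t)).
      apply (Rmult_le_reg_r d); [lra|].
      replace ((exp (k * d * t) - 1) / d * d) with (exp (k * d * t) - 1) by (field; lra); lra.
  - exists (fun t => k * t); split; [|split].
    + ring.
    + intros t; auto_derive; [easy | ring].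
    + intros t _; lra.
Qed.

(* The substitution phi = (1 + b h) (X - a) + a linearises the equation: phi' = k (X - a) phi. *)
Lemma riccati_closed_form (X h : R -> R) (k a b : R) :
  X 0 = 0 -> filterlim X (at_right 0) (locally 0) ->
  (forall t, 0 < t -> is_derive X t (k * (X t - a) * (X t - b))) ->
  h 0 = 0 -> (forall t, is_derive h t (k * (1 + (b - a) * h t))) ->
  forall t, 0 <= t -> (1 + b * h t) * (X t - a) = - a.
Proof.
  intros HX0 HXlim HX Hh0 Hh t Ht.
  set (phi := fun s => (1 + b * h s) * (X s - a) + a).
  enough (phi t = 0) by (unfold phi in *; lra).
  apply (linear_ode_zero phi (fun s => k * X s + - (k * a))); [| | | |exact Ht].
  - unfold phi; rewrite HX0, Hh0; ring.
  - replace (locally 0) with (locally ((1 + b * h 0) * (0 + - a) + a))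
      by (f_equal; rewrite Hh0; ring).
    apply filterlim_Rplus; [apply filterlim_Rmult|apply filterlim_const].
    + apply filterlim_Rplus; [apply filterlim_const|].
      apply filterlim_Rmult; [apply filterlim_const|].
      apply filterlim_at_right_continuous, (ex_derive_continuous (V := R_NormedModule)).
      eexists; apply Hh.
    + apply filterlim_Rplus; [exact HXlim | apply filterlim_const].
  - intros s Hs; unfold phi; auto_derive.
    + repeat split; eexists; [apply Hh | apply HX; lra].
    + rewrite (is_derive_unique (fun x : R => h x) s _ (Hh s)),
        (is_derive_unique (fun x : R => X x) s _ (HX s Hs)); ring.
  - apply bounded_on_every_Ioc_affine, (bounded_on_every_Ioc_of_right_limit X 0 HXlim).
    intros s Hs; apply (ex_derive_continuous (V := R_NormedModule)); eexists; apply HX, Hs.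
Qed.

Lemma riccati_real_roots_limit (X : R -> R) (k a b : R) :
  0 < k -> a <= b -> 0 < b ->
  X 0 = 0 -> filterlim X (at_right 0) (locally 0) ->
  (forall t, 0 < t -> is_derive X t (k * (X t - a) * (X t - b))) ->
  filterlim X (Rbar_locally p_infty) (locally a).
Proof.
  intros Hk Hab Hb HX0 HXlim HX.
  destruct (exp_growth_solution k (b - a) Hk ltac:(lra)) as [h [Hh0 [Hh Hgrowth]]].
  pose proof (riccati_closed_form X h k a b HX0 HXlim HX Hh0 Hh) as Hclosed.
  apply filterlim_locally; intros eps; pose proof (cond_pos eps) as Heps.
  exists (Rabs a / (b * k * eps)); intros t Ht.
  assert (Hbke : 0 < b * k * eps) by (apply Rmult_lt_0_compat; [nra | lra]).
  assert (Hkt : Rabs a < b * k * eps * t).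
  { apply (Rmult_lt_compat_l (b * k * eps)) in Ht; [|exact Hbke].
    unfold Rdiv in Ht.
    rewrite (Rmult_comm (Rabs a)), <- Rmult_assoc, Rinv_r, Rmult_1_l in Ht; lra. }
  assert (Ht0 : 0 < t) by (pose proof (Rabs_pos a); nra).
  specialize (Hgrowth t ltac:(lra)).
  assert (Hbound : Rabs a < eps * (1 + b * h t)) by nra.
  change (Rabs (X t - a) < eps).
  assert (Hpos : 0 < 1 + b * h t) by (assert (0 < h t) by nra; nra).
  apply (Rmult_lt_reg_r (1 + b * h t)); [exact Hpos|].
  rewrite <- (Rabs_pos_eq (1 + b * h t)) at 1 by lra.
  rewrite <- Rabs_mult, (Rmult_comm (X t - a)), Hclosed, Rabs_Ropp by lra; lra.
Qed.

Lemma quadratic_real_roots (k g s : R) :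
  0 < k -> 0 < g -> 4 * k * s <= g * g ->
  exists a b, a <= b /\ 0 < b /\ forall x, k * (x * x) - g * x + s = k * (x - a) * (x - b).
Proof.
  intros Hk Hg Hdisc.
  set (r := sqrt (g * g - 4 * k * s)).
  assert (Hr : r * r = g * g - 4 * k * s) by (apply sqrt_sqrt; lra).
  assert (Hr0 : 0 <= r) by apply sqrt_pos.
  exists ((g - r) / (2 * k)), ((g + r) / (2 * k)); split; [|split].
  - apply Rmult_le_compat_r; [left; apply Rinv_0_lt_compat|]; lra.
  - apply Rdiv_lt_0_compat; lra.
  - intros x; field_simplify; [|lra].
    replace (r ^ 2) with (g * g - 4 * k * s) by (rewrite <- Hr; ring); field; lra.
Qed.

Open Scope C_scope.

Lemma is_derive_Re (F : R -> C) (t : R) (l : C) :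
  is_derive F t l -> is_derive (fun s => Re (F s)) t (Re l).
Proof.
  unfold is_derive; intros HF.
  exact (filterdiff_comp' F
    (fun p : prod_NormedModule R_AbsRing R_NormedModule R_NormedModule => fst p)
    t _ (fun p => fst p) HF (filterdiff_linear _ is_linear_fst)).
Qed.

Lemma is_derive_Im (F : R -> C) (t : R) (l : C) :
  is_derive F t l -> is_derive (fun s => Im (F s)) t (Im l).
Proof.
  unfold is_derive; intros HF.
  exact (filterdiff_comp' F
    (fun p : prod_NormedModule R_AbsRing R_NormedModule R_NormedModule => snd p)
    t _ (fun p => snd p) HF (filterdiff_linear _ is_linear_snd)).
Qed.

Lemma filterlim_Re {T} {G : (T -> Prop) -> Prop} {FG : Filter G} (F : T -> C) (z : C) :
  filterlim F G (locally z) -> filterlim (fun s => Re (F s)) G (locally (Re z)).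
Proof.
  intros HF; eapply filterlim_comp; [exact HF|].
  intros P [eps HP]; exists eps; intros w [Hw _]; exact (HP _ Hw).
Qed.

Lemma filterlim_Im {T} {G : (T -> Prop) -> Prop} {FG : Filter G} (F : T -> C) (z : C) :
  filterlim F G (locally z) -> filterlim (fun s => Im (F s)) G (locally (Im z)).
Proof.
  intros HF; eapply filterlim_comp; [exact HF|].
  intros P [eps HP]; exists eps; intros w [_ Hw]; exact (HP _ Hw).
Qed.

Lemma filterlim_RtoC {T} {G : (T -> Prop) -> Prop} {FG : Filter G} (f : T -> R) (l : R) :
  filterlim f G (locally l) -> filterlim (fun s => RtoC (f s)) G (locally (RtoC l)).
Proof.
  intros Hf; apply filterlim_locally; intros eps.
  apply (filter_imp (fun s => ball l eps (f s))); [|exact (proj1 (filterlim_locally _ _) Hf eps)].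
  intros s Hs; split; [exact Hs | apply ball_center].
Qed.

Lemma Qn_resonant (gamma Omega : R) : Qn gamma Omega Omega = RtoC (- gamma).
Proof. unfold Qn, RtoC; apply injective_projections; simpl; ring. Qed.

Lemma resonant_riccati_Re_Im (kappa gamma chi Omega : R) (F : R -> C) (t : R) :
  is_derive F t (RtoC kappa * (F t * F t) + Qn gamma Omega Omega * F t + Sn gamma chi) ->
  is_derive (fun s => Re (F s)) t
    (kappa * (Re (F t) * Re (F t) - Im (F t) * Im (F t)) - gamma * Re (F t) + gamma * chi / 2)%R /\
  is_derive (fun s => Im (F s)) t ((2 * kappa * Re (F t) - gamma) * Im (F t))%R.
Proof.
  rewrite Qn_resonant; intros HF; split.
  - replace
      (kappa * (Re (F t) * Re (F t) - Im (F t) * Im (F t)) - gamma * Re (F t) + gamma * chi / 2)%R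
      with (Re (RtoC kappa * (F t * F t) + RtoC (- gamma) * F t + Sn gamma chi))
      by (unfold Sn, Re, Im; simpl; ring).
    exact (is_derive_Re F t _ HF).
  - replace ((2 * kappa * Re (F t) - gamma) * Im (F t))%R
      with (Im (RtoC kappa * (F t * F t) + RtoC (- gamma) * F t + Sn gamma chi))
      by (unfold Sn, Re, Im; simpl; ring).
    exact (is_derive_Im F t _ HF).
Qed.

Lemma resonant_riccati_solution_real (kappa gamma chi Omega : R) (F : R -> C) :
  riccati_solution kappa gamma chi Omega Omega F ->
  forall t, (0 <= t)%R -> Im (F t) = 0%R.
Proof.
  intros [HF0 [HFlim HF]].
  pose proof (fun t Ht => resonant_riccati_Re_Im kappa gamma chi Omega F t (HF t Ht)) as HReIm.
  apply (linear_ode_zero _ (fun t => 2 * kappa * Re (F t) + - gamma)%R).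
  - rewrite HF0; reflexivity.
  - replace 0%R with (Im (F 0%R)) at 2 by (rewrite HF0; reflexivity).
    exact (filterlim_Im F _ HFlim).
  - intros t Ht.
    replace ((2 * kappa * Re (F t) + - gamma) * Im (F t))%R
      with ((2 * kappa * Re (F t) - gamma) * Im (F t))%R by ring.
    exact (proj2 (HReIm t Ht)).
  - apply bounded_on_every_Ioc_affine.
    apply (bounded_on_every_Ioc_of_right_limit _ _ (filterlim_Re F _ HFlim)).
    intros t Ht; apply (ex_derive_continuous (V := R_NormedModule)).
    eexists; exact (proj1 (HReIm t Ht)).
Qed.

Lemma converges_at_infty_of_real_multiple (G : R -> C) (X : R -> R) (c l : R) :
  filterlim X (Rbar_locally p_infty) (locally l) ->
  (forall t, (0 < t)%R -> G t = RtoC (c * X t)) -> converges_at_infty G.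
Proof.
  intros HX HG; exists (RtoC (c * l)).
  apply (filterlim_ext_loc (fun t => RtoC (c * X t))).
  - exists 0%R; intros t Ht; symmetry; exact (HG t Ht).
  - apply filterlim_RtoC, filterlim_Rmult; [apply filterlim_const | exact HX].
Qed.

Lemma resonant_riccati_Re_limit (kappa gamma chi Omega : R) (F : R -> C) :
  (0 < kappa)%R -> (0 < gamma)%R -> (4 * kappa * (gamma * chi / 2) <= gamma * gamma)%R ->
  riccati_solution kappa gamma chi Omega Omega F ->
  exists a, filterlim (fun t => Re (F t)) (Rbar_locally p_infty) (locally a).
Proof.
  intros Hk Hg Hdisc Hsol.
  pose proof (resonant_riccati_solution_real _ _ _ _ F Hsol) as HIm.
  destruct Hsol as [HF0 [HFlim HF]].
  destruct (quadratic_real_roots kappa gamma (gamma * chi / 2) Hk Hg Hdisc)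
    as [a [b [Hab [Hb Hroots]]]].
  exists a; apply (riccati_real_roots_limit _ kappa a b Hk Hab Hb).
  - rewrite HF0; reflexivity.
  - replace 0%R with (Re (F 0%R)) at 2 by (rewrite HF0; reflexivity).
    exact (filterlim_Re F _ HFlim).
  - intros t Ht.
    pose proof (proj1 (resonant_riccati_Re_Im kappa gamma chi Omega F t (HF t Ht))) as HRe.
    rewrite (HIm t), Rmult_0_l, Rminus_0_r, Hroots in HRe by lra; exact HRe.
Qed.

Theorem theorem1 (kappa gamma chi Omega omega : R) (F : R -> C) :
  (0 < kappa)%R -> (0 < gamma)%R ->
  riccati_solution kappa gamma chi Omega omega F ->
  omega = Omega ->
  (Re (4 * RtoC kappa * Sn gamma chi - Qn gamma Omega omega * Qn gamma Omega omega) <= 0)%R /\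
  Im (4 * RtoC kappa * Sn gamma chi - Qn gamma Omega omega * Qn gamma Omega omega) = 0%R ->
  converges_at_infty F /\
  converges_at_infty (fun t => RtoC kappa * (F t + Cconj (F t))) /\
  converges_at_infty (fun t => RtoC kappa * Cconj (F t)) /\
  converges_at_infty (fun t => RtoC kappa * F t).
Proof.
  intros Hk Hg Hsol -> [Hdisc _].
  rewrite Qn_resonant in Hdisc; unfold Sn in Hdisc; simpl in Hdisc.
  destruct (resonant_riccati_Re_limit kappa gamma chi Omega F Hk Hg ltac:(lra) Hsol) as [a Ha].
  assert (HF : forall t, (0 < t)%R -> F t = RtoC (Re (F t))).
  { intros t Ht; unfold RtoC.
    rewrite <- (resonant_riccati_solution_real _ _ _ _ F Hsol t) by lra.
    apply surjective_pairing. }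
  split; [|split; [|split]].
  - apply (converges_at_infty_of_real_multiple _ _ 1 a Ha).
    intros t Ht; rewrite (HF t Ht) at 1; rewrite Rmult_1_l; reflexivity.
  - apply (converges_at_infty_of_real_multiple _ _ (2 * kappa) a Ha).
    intros t Ht; rewrite (HF t Ht); apply injective_projections; simpl; ring.
  - apply (converges_at_infty_of_real_multiple _ _ kappa a Ha).
    intros t Ht; rewrite (HF t Ht); apply injective_projections; simpl; ring.
  - apply (converges_at_infty_of_real_multiple _ _ kappa a Ha).
    intros t Ht; rewrite (HF t Ht); apply injective_projections; simpl; ring.
Qed.
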